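(* There exists an absolute constant $0<c\le\tfrac12$ such that for every $q\in(0,\tfrac12)$, every positive integer $m$ and every integer $n>1$, \[ \mathbb{P}(\tau'_m\ge n^2)\ge 1-e^{-cm/n}. \]
   Context: Fix $q\in(0,1/2)$. Let $Y_1,Y_2,\dots$ be i.i.d. with $\mathbb{P}(Y_i=1)=\mathbb{P}(Y_i=-1)=q$ and $\mathbb{P}(Y_i=0)=1-2q$, and $T_j=Y_1+\cdots+Y_j$ (the lazy simple random walk with parameter $q$). For a nonzero integer $m$, $\tau'_m$ is the smallest positive integer $t$ with $T_t=m$. *)

From Stdlib Require Import Reals ZArith List.
Import ListNotations.
Open Scope R_scope.

Fixpoint step_seqs (L : nat) : list (list Z) :=
  match L with
  | O => [nil]
  | S L' => flat_map (fun p => map (fun y => y :: p) [(-1)%Z; 0%Z; 1%Z]) (step_seqs L')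
  end.

Definition step_prob (q : R) (y : Z) : R :=
  if Z.eqb y 0 then 1 - 2 * q else q.

Definition seq_prob (q : R) (p : list Z) : R :=
  fold_right (fun y acc => step_prob q y * acc) 1 p.

Fixpoint avoids (s m : Z) (p : list Z) : bool :=
  match p with
  | nil => true
  | y :: p' => negb (Z.eqb (s + y) m) && avoids (s + y) m p'
  end.

(* P(tau'_m >= N) for the lazy simple random walk T_j = Y_1+...+Y_j (T_0 = 0):
   tau'_m >= N iff T_t <> m for all 1 <= t <= N-1 (including tau'_m = +oo),
   an event determined by Y_1,...,Y_{N-1}. *)
Definition prob_tau_ge (q : R) (m : Z) (N : nat) : R :=
  fold_right Rplus 0
    (map (fun p => if avoids 0 m p then seq_prob q p else 0) (step_seqs (N - 1))).

From Stdlib Require Import Reals ZArith List Lra Lia Psatz.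
Import ListNotations.
Open Scope R_scope.

(* The probability u_L(s) that the walk started at s avoids m during L steps
   satisfies u_{L+1}(s) = q u_L(s-1) + (1-2q) u_L(s) + q u_L(s+1) off the
   target, u = 0 at the target and u_0 = 1 elsewhere.  Any function of
   (time, distance to m) satisfying the corresponding inequalities therefore
   bounds u from below.  With a = 1/n and L = n^2 - 1 steps, two such barriers
   suffice: the cubic a x - a^3 N x / 2 - a^3 x^3 / 6 (an exact solution of
   the walk equation when q = 1/2) is at least a m / 8 when m <= 10n/9, and
   1 - (1 + a^2)^N (1 - a)^x is at least 1 - e^(1 - a m) when m >= 10n/9;
   in both regimes this beats 1 - e^(-m/(10n)). *)

Lemma cubic_le_one t : 0 <= t -> t - t ^ 3 / 6 <= 1.
Proof.
  intros Ht.
  (* 6 - 6t + t^3 = (t - 7/5)^2 (t + 14/5) + (64 - 15t)/125 *)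
  destruct (Rle_lt_dec t 3).
  - assert (0 <= (t - 7/5) ^ 2 * (t + 14/5)) by (apply Rmult_le_pos; [apply pow2_ge_0 | lra]).
    nra.
  - nra.
Qed.

Lemma pow_le_exp_mul x k : -1 <= x -> (1 + x) ^ k <= exp (INR k * x).
Proof.
  intros Hx.
  replace (exp (INR k * x)) with (exp x ^ k).
  - apply pow_incr. pose proof (exp_ineq1_le x). lra.
  - induction k as [|k IH]; simpl pow.
    + now rewrite Rmult_0_l, exp_0.
    + rewrite IH, S_INR, <- exp_plus. f_equal. ring.
Qed.

Lemma exp_le_exp x y : x <= y -> exp x <= exp y.
Proof.
  intros [Hlt | Heq].
  - now apply Rlt_le, exp_increasing.
  - rewrite Heq; apply Rle_refl.
Qed.

Definition avoid_weight (q : R) (s m : Z) (p : list Z) : R :=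
  if avoids s m p then seq_prob q p else 0.

Definition avoid_sum (q : R) (s m : Z) (ps : list (list Z)) : R :=
  fold_right Rplus 0 (map (avoid_weight q s m) ps).

Definition survival (q : R) (m : Z) (L : nat) (s : Z) : R :=
  if Z.eqb s m then 0 else avoid_sum q s m (step_seqs L).

Lemma avoid_weight_cons q s m y p :
  avoid_weight q s m (y :: p) =
  step_prob q y * (if Z.eqb (s + y) m then 0 else avoid_weight q (s + y) m p).
Proof.
  unfold avoid_weight; simpl.
  destruct (Z.eqb (s + y) m), (avoids (s + y) m p); simpl; ring.
Qed.

Lemma avoid_sum_extend q s m ps :
  avoid_sum q s m (flat_map (fun p => map (fun y => y :: p) [(-1)%Z; 0%Z; 1%Z]) ps) =
  step_prob q (-1) * (if Z.eqb (s + -1) m then 0 else avoid_sum q (s + -1) m ps)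
  + step_prob q 0 * (if Z.eqb (s + 0) m then 0 else avoid_sum q (s + 0) m ps)
  + step_prob q 1 * (if Z.eqb (s + 1) m then 0 else avoid_sum q (s + 1) m ps).
Proof.
  unfold avoid_sum; induction ps as [|p ps IH]; simpl in *.
  - destruct (Z.eqb (s + -1) m), (Z.eqb (s + 0) m), (Z.eqb (s + 1) m); ring.
  - rewrite IH, !avoid_weight_cons.
    destruct (Z.eqb (s + -1) m), (Z.eqb (s + 0) m), (Z.eqb (s + 1) m); ring.
Qed.

Lemma survival_at_target q m L : survival q m L m = 0.
Proof. unfold survival; now rewrite Z.eqb_refl. Qed.

Lemma survival_0 q m s : s <> m -> survival q m 0 s = 1.
Proof.
  intros Hs; unfold survival, avoid_sum, avoid_weight.
  apply Z.eqb_neq in Hs; rewrite Hs; simpl; ring.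
Qed.

Lemma survival_S q m L s : s <> m ->
  survival q m (S L) s =
  q * survival q m L (s - 1) + (1 - 2 * q) * survival q m L s + q * survival q m L (s + 1).
Proof.
  intros Hs; unfold survival at 1.
  apply Z.eqb_neq in Hs; rewrite Hs; simpl step_seqs.
  rewrite avoid_sum_extend, Z.add_0_r; unfold survival, step_prob; simpl.
  replace (s + -1)%Z with (s - 1)%Z by ring; ring.
Qed.

Record subsolution (q : R) (g : nat -> nat -> R) : Prop := {
  subsolution_init : forall x, (0 < x)%nat -> g 0%nat x <= 1;
  subsolution_target : forall N, g N 0%nat <= 0;
  subsolution_step : forall N x,
    g (S N) (S x) <= q * g N (S (S x)) + (1 - 2 * q) * g N (S x) + q * g N x }.

Lemma subsolution_le_survival q m g : 0 <= q -> q <= 1 / 2 -> subsolution q g ->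
  forall L x, g L x <= survival q m L (m - Z.of_nat x).
Proof.
  intros Hq0 Hq1 [Hinit Htarget Hstep] L.
  induction L as [|L IH]; intros [|x];
    try (simpl Z.of_nat; rewrite Z.sub_0_r, survival_at_target; apply Htarget).
  - rewrite survival_0 by lia. apply Hinit; lia.
  - rewrite survival_S by lia.
    replace (m - Z.of_nat (S x) - 1)%Z with (m - Z.of_nat (S (S x)))%Z by lia.
    replace (m - Z.of_nat (S x) + 1)%Z with (m - Z.of_nat x)%Z by lia.
    eapply Rle_trans; [apply Hstep|].
    repeat apply Rplus_le_compat; apply Rmult_le_compat_l; auto; lra.
Qed.

Lemma subsolution_le_prob_tau_ge q g (m N : nat) : 0 <= q -> q <= 1 / 2 ->
  subsolution q g -> (0 < m)%nat ->
  g (N - 1)%nat m <= prob_tau_ge q (Z.of_nat m) N.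
Proof.
  intros Hq0 Hq1 Hg Hm.
  replace (prob_tau_ge q (Z.of_nat m) N)
    with (survival q (Z.of_nat m) (N - 1) (Z.of_nat m - Z.of_nat m)).
  - now apply subsolution_le_survival.
  - unfold survival. rewrite Z.sub_diag.
    replace (Z.eqb 0 (Z.of_nat m)) with false by (symmetry; apply Z.eqb_neq; lia).
    reflexivity.
Qed.

Definition cubic_barrier (a : R) (N x : nat) : R :=
  a * INR x - a ^ 3 * INR N * INR x / 2 - a ^ 3 * INR x ^ 3 / 6.

Lemma subsolution_cubic_barrier q a : 0 <= a -> q <= 1 / 2 ->
  subsolution q (cubic_barrier a).
Proof.
  intros Ha Hq; unfold cubic_barrier; split.
  - intros x _; simpl INR.
    pose proof (cubic_le_one (a * INR x)) as Ht.
    assert (0 <= a * INR x) by (apply Rmult_le_pos; [lra | apply pos_INR]).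
    replace ((a * INR x) ^ 3) with (a ^ 3 * INR x ^ 3) in Ht by ring.
    lra.
  - intros N; simpl INR; lra.
  - intros N x; rewrite !S_INR.
    (* x^3 has discrete Laplacian 6 (x + 1); the step holds with exactly this slack *)
    assert (Hdefect : 0 <= (1 - 2 * q) * (a ^ 3 * (INR x + 1)) / 2).
    { assert (0 <= a ^ 3 * (INR x + 1)).
      { apply Rmult_le_pos; [now apply pow_le | pose proof (pos_INR x); lra]. }
      apply Rmult_le_pos; [apply Rmult_le_pos|]; lra. }
    lra.
Qed.

Definition exp_barrier (a : R) (N x : nat) : R :=
  1 - (1 + a ^ 2) ^ N * (1 - a) ^ x.

Lemma subsolution_exp_barrier q a : 0 <= q -> 0 <= a -> a + q <= 1 ->
  subsolution q (exp_barrier a).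
Proof.
  intros Hq Ha Haq; unfold exp_barrier; split.
  - intros x _; rewrite pow_O, Rmult_1_l.
    assert (0 <= (1 - a) ^ x) by (apply pow_le; lra). lra.
  - intros N; rewrite pow_O, Rmult_1_r.
    assert (1 <= (1 + a ^ 2) ^ N) by (apply pow_R1_Rle; nra). lra.
  - intros N x; rewrite <- !(tech_pow_Rmult (1 - a)), <- (tech_pow_Rmult (1 + a ^ 2)).
    assert (Hdefect : 0 <= (1 + a ^ 2) ^ N * (1 - a) ^ x * a ^ 2 * (1 - a - q)).
    { assert (0 <= (1 + a ^ 2) ^ N * (1 - a) ^ x) by (apply Rmult_le_pos; apply pow_le; nra).
      apply Rmult_le_pos; [apply Rmult_le_pos; [assumption | apply pow2_ge_0] | lra]. }
    lra.
Qed.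

Lemma one_sub_exp_le_cubic_barrier a L x :
  0 <= a -> INR L * a ^ 2 <= 1 -> a * INR x <= 3 / 2 ->
  1 - exp (- (a * INR x / 10)) <= cubic_barrier a L x.
Proof.
  intros Ha HL Hx; unfold cubic_barrier.
  assert (Ht : 0 <= a * INR x) by (apply Rmult_le_pos; [lra | apply pos_INR]).
  pose proof (exp_ineq1_le (- (a * INR x / 10))).
  assert (INR L * a ^ 2 * (a * INR x) <= 1 * (a * INR x)) by (apply Rmult_le_compat_r; lra).
  assert ((a * INR x) ^ 2 * (a * INR x) <= 9 / 4 * (a * INR x))
    by (apply Rmult_le_compat_r; nra).
  lra.
Qed.

Lemma one_sub_exp_le_exp_barrier a L x :
  0 <= a <= 1 -> INR L * a ^ 2 <= 1 -> 10 <= 9 * (a * INR x) ->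
  1 - exp (- (a * INR x / 10)) <= exp_barrier a L x.
Proof.
  intros Ha HL Hx; unfold exp_barrier.
  assert (Htime : (1 + a ^ 2) ^ L <= exp (INR L * a ^ 2)) by (apply pow_le_exp_mul; nra).
  assert (Hspace : (1 - a) ^ x <= exp (INR x * - a)).
  { replace (1 - a) with (1 + - a) by ring. apply pow_le_exp_mul; lra. }
  assert (Hprod : (1 + a ^ 2) ^ L * (1 - a) ^ x <= exp (INR L * a ^ 2) * exp (INR x * - a)).
  { apply Rmult_le_compat; auto; apply pow_le; nra. }
  rewrite <- exp_plus in Hprod.
  assert (exp (INR L * a ^ 2 + INR x * - a) <= exp (- (a * INR x / 10)))
    by (apply exp_le_exp; lra).
  lra.
Qed.

Theorem corollary2p3 :
  exists c : R, 0 < c /\ c <= 1 / 2 /\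
    forall (q : R), 0 < q -> q < 1 / 2 ->
    forall (m n : nat), (0 < m)%nat -> (1 < n)%nat ->
      1 - exp (- (c * INR m / INR n)) <= prob_tau_ge q (Z.of_nat m) (n * n).
Proof.
  exists (1 / 10); split; [lra | split; [lra |]].
  intros q Hq0 Hq1 m n Hm Hn.
  assert (Hn2 : 2 <= INR n) by (replace 2 with (INR 2) by (simpl; ring); apply le_INR; lia).
  set (a := / INR n).
  assert (Ha : 0 < a <= 1 / 2).
  { unfold a; split; [apply Rinv_0_lt_compat; lra |].
    apply Rmult_le_reg_l with (INR n); [lra|]. rewrite Rinv_r; lra. }
  assert (Hna : INR n * a = 1) by (unfold a; field; lra).
  assert (HL : INR (n * n - 1) * a ^ 2 <= 1).
  { assert (INR (n * n - 1) <= INR n * INR n) by (rewrite <- mult_INR; apply le_INR; lia).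
    nra. }
  replace (1 / 10 * INR m / INR n) with (a * INR m / 10) by (unfold a; field; lra).
  destruct (Rle_lt_dec (a * INR m) (10 / 9)) as [Hnear | Hfar].
  - apply Rle_trans with (cubic_barrier a (n * n - 1) m).
    + apply one_sub_exp_le_cubic_barrier; lra.
    + apply subsolution_le_prob_tau_ge; auto; try lra.
      apply subsolution_cubic_barrier; lra.
  - apply Rle_trans with (exp_barrier a (n * n - 1) m).
    + apply one_sub_exp_le_exp_barrier; lra.
    + apply subsolution_le_prob_tau_ge; auto; try lra.
      apply subsolution_exp_barrier; lra.
Qed.
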